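(* Let $\mathcal{A}$ be a topological ring, let $\mathcal{B}$ be a topological $\mathcal{A}$-algebra and let $c\colon\mathcal{B}\to\widehat{\mathcal{B}}$ be the separated completion of $\mathcal{B}$. Then for every continuous iterated higher $\mathcal{A}$-derivation $D=\{D^{(i)}\}_{i\ge0}$ of $\mathcal{B}$ there exists a unique continuous iterated higher $\mathcal{A}$-derivation $\widehat{D}=\{\widehat{D}^{(i)}\}_{i\ge0}$ of $\widehat{\mathcal{B}}$ such that $\widehat{D}^{(i)}\circ c=c\circ D^{(i)}$ for every $i\ge0$. Furthermore, if $D$ is topologically integrable, then so is $\widehat{D}$.
   Context: Conventions: topological rings are linearly topologized with a countable fundamental system of open ideals; homomorphisms are continuous; a topological $\mathcal{A}$-algebra is a topological ring with a continuous homomorphism from $\mathcal{A}$. The separated completion is $\widehat{\mathcal{B}}=\varprojlim_{\mathfrak{b}}\mathcal{B}/\mathfrak{b}$ over open ideals (quotients discrete) with inverse limit topology, and $c$ the canonical map. A continuous iterated higher $\mathcal{A}$-derivation of $\mathcal{B}$ is a family $\{D^{(i)}\}_{i\ge0}$ of continuous $\mathcal{A}$-module homomorphisms $\mathcal{B}\to\mathcal{B}$ with $D^{(0)}=\mathrm{id}$, $D^{(i)}(bb')=\sum_{j=0}^iD^{(j)}(b)D^{(i-j)}(b')$, and $D^{(i)}\circ D^{(j)}=\binom{i+j}{i}D^{(i+j)}$. It is topologically integrable if $(D^{(i)})_i$ converges continuously to $0$: for every $b$ and every open ideal $\mathfrak{b}'$ there exist an open ideal $\mathfrak{b}$ and $n_0$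 with $D^{(n)}(b+\mathfrak{b})\subseteq\mathfrak{b}'$ for all $n\ge n_0$. *)

From HB Require Import structures.
From mathcomp Require Import all_boot all_order all_algebra.
From mathcomp Require Import boolp classical_sets ring.
Set Implicit Arguments.
Unset Strict Implicit.
Unset Printing Implicit Defensive.
Import Order.TTheory GRing.Theory.
Local Open Scope classical_set_scope.
Local Open Scope ring_scope.

Definition is_ideal (R : comPzRingType) (I : set R) : Prop :=
  I 0 /\ (forall x y, I x -> I y -> I (x + y)) /\ (forall r x, I x -> I (r * x)).

(** [N] is a countable fundamental system of open ideals defining a linear
    topology on [R]: the [N n] are ideals, and the family is directed
    (any two contain a third).  The topology is the one for which the open
    sets are the unions of cosets [x + N n]; hence a subset is a
    neighbourhood of [x] iff it contains some [x + N n]. *)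
Definition lin_top (R : comPzRingType) (N : nat -> set R) : Prop :=
  (forall n, is_ideal (N n)) /\ (forall m n, exists k, N k `<=` N m `&` N n).

Definition open_ideal (R : comPzRingType) (N : nat -> set R) (b : set R) : Prop :=
  is_ideal b /\ exists n, N n `<=` b.

Definition lcontinuous (R S : comPzRingType) (NR : nat -> set R) (NS : nat -> set S)
    (f : R -> S) : Prop :=
  forall x b', open_ideal NS b' ->
    exists b, open_ideal NR b /\ forall y, b (y - x) -> b' (f y - f x).

(** * Continuous iterated higher A-derivations
    [phi : A -> R] is the structure map of the A-algebra [R]; the A-module
    structure on [R] is [a . x = phi a * x]. *)
Definition iter_higher_der (A R : comPzRingType) (phi : A -> R) (D : nat -> R -> R) : Prop :=
  (forall i x y, D i (x + y) = D i x + D i y) /\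
  (forall i a x, D i (phi a * x) = phi a * D i x) /\
  (forall x, D 0%N x = x) /\
  (forall i x y, D i (x * y) = \sum_(j < i.+1) D j x * D (i - j)%N y) /\
  (forall i j x, D i (D j x) = D (i + j)%N x *+ 'C(i + j, i)).

Definition cont_iter_higher_der (A R : comPzRingType) (N : nat -> set R)
    (phi : A -> R) (D : nat -> R -> R) : Prop :=
  iter_higher_der phi D /\ forall i, lcontinuous N N (D i).

(** Topological integrability: (D^(i))_i converges continuously to 0. *)
Definition top_integrable (R : comPzRingType) (N : nat -> set R) (D : nat -> R -> R) : Prop :=
  forall x b', open_ideal N b' ->
    exists b n0, open_ideal N b /\
      forall n y, (n0 <= n)%N -> b (y - x) -> b' (D n y).

(** * The separated completion  \hat R = lim_{b open ideal} R / b
    An element of R/b is represented by the coset (a subset of R); an element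
    of the inverse limit is a family [xi] indexed by the open ideals [b], with
    [xi b] a coset of [b], compatible with the transition maps R/b -> R/b'
    for [b <= b'] (i.e. [xi b] is contained in [xi b']).  For sets [b] that are
    not open ideals we put [xi b = set0] so that equality is extensional. *)
Definition coset (R : comPzRingType) (x : R) (b : set R) : set R := [set y | b (y - x)].

Definition cpl_ax (R : comPzRingType) (N : nat -> set R) (xi : set R -> set R) : Prop :=
  (forall b, ~ open_ideal N b -> xi b = set0) /\
  (forall b, open_ideal N b -> exists x, xi b = coset x b) /\
  (forall b b', open_ideal N b -> open_ideal N b' -> b `<=` b' -> xi b `<=` xi b').

Record completion (R : comPzRingType) (N : nat -> set R) := Cpl {
  cval : set R -> set R;
  cvalP : cpl_ax N cval }.

HB.instance Definition _ (R : comPzRingType) (N : nat -> set R) :=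
  gen_eqMixin (completion N).
HB.instance Definition _ (R : comPzRingType) (N : nat -> set R) :=
  gen_choiceMixin (completion N).

Lemma ideal0 (R : comPzRingType) (I : set R) : is_ideal I -> I 0.
Proof. by case. Qed.

Lemma idealD (R : comPzRingType) (I : set R) x y : is_ideal I -> I x -> I y -> I (x + y).
Proof. by case=> _ [+ _]; apply. Qed.

Lemma idealM (R : comPzRingType) (I : set R) r x : is_ideal I -> I x -> I (r * x).
Proof. by case=> _ [_]; apply. Qed.

Lemma idealN (R : comPzRingType) (I : set R) x : is_ideal I -> I x -> I (- x).
Proof. by move=> hI hx; rewrite -mulN1r; apply: idealM. Qed.

Lemma idealB (R : comPzRingType) (I : set R) x y : is_ideal I -> I x -> I y -> I (x - y).
Proof. by move=> hI hx hy; apply: idealD => //; apply: idealN. Qed.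

Definition compat2 (R : comPzRingType) (f : R -> R -> R) : Prop :=
  forall (I : set R) x x' y y', is_ideal I -> I (x - x') -> I (y - y') ->
    I (f x y - f x' y').

Lemma compat_add (R : comPzRingType) : compat2 (fun x y : R => x + y).
Proof.
move=> I x x' y y' hI hx hy.
have -> : x + y - (x' + y') = (x - x') + (y - y') by ring.
exact: idealD.
Qed.

Lemma compat_mul (R : comPzRingType) : compat2 (fun x y : R => x * y).
Proof.
move=> I x x' y y' hI hx hy.
have -> : x * y - x' * y' = x * (y - y') + y' * (x - x').
  by ring.
by apply: idealD => //; apply: idealM.
Qed.

Lemma compat_opp (R : comPzRingType) : compat2 (fun x _ : R => - x).
Proof. by move=> I x x' y y' hI hx _; rewrite -opprD; apply: idealN. Qed.

Definition lift0_fun (R : comPzRingType) (N : nat -> set R) (c : R) : set R -> set R :=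
  fun b => [set z | open_ideal N b /\ b (z - c)].

Lemma lift0_ax (R : comPzRingType) (N : nat -> set R) (c : R) : cpl_ax N (lift0_fun N c).
Proof.
split; [|split].
- by move=> b nb; apply/seteqP; split => z //= [].
- move=> b ob; exists c; apply/seteqP; split => z /=; first by case.
  by move=> h; split.
- by move=> b b' ob ob' sbb' z [_ h]; split => //; apply: sbb'.
Qed.

Definition lift0 (R : comPzRingType) (N : nat -> set R) (c : R) : completion N :=
  Cpl (lift0_ax N c).

Definition lift2_fun (R : comPzRingType) (N : nat -> set R) (f : R -> R -> R)
    (xi eta : completion N) : set R -> set R :=
  fun b => [set z | exists x y, cval xi b x /\ cval eta b y /\ b (z - f x y)].

Lemma cval_ex (R : comPzRingType) (N : nat -> set R) (xi : completion N) b :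
  open_ideal N b -> exists x, cval xi b x.
Proof.
move=> ob; have [_ [h _]] := cvalP xi; have [x ->] := h b ob.
by exists x; rewrite /coset /= subrr; apply: ideal0; case: ob.
Qed.

Lemma cval_diff (R : comPzRingType) (N : nat -> set R) (xi : completion N) b x y :
  open_ideal N b -> cval xi b x -> cval xi b y -> b (x - y).
Proof.
move=> ob; have [_ [h _]] := cvalP xi; have [c ->] := h b ob.
rewrite /coset /= => hx hy.
have -> : x - y = (x - c) - (y - c) by ring.
by apply: idealB => //; case: ob.
Qed.

Lemma cval_open (R : comPzRingType) (N : nat -> set R) (xi : completion N) b x :
  cval xi b x -> open_ideal N b.
Proof.
move=> hx; apply: contrapT => nb; have [h _] := cvalP xi.
by move: hx; rewrite (h b nb).
Qed.

Lemma lift2_ax (R : comPzRingType) (N : nat -> set R) (f : R -> R -> R)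
    (xi eta : completion N) : compat2 f -> cpl_ax N (lift2_fun f xi eta).
Proof.
move=> cf; split; [|split].
- move=> b nb; apply/seteqP; split => z //= [x [y [hx _]]].
  by apply: nb; apply: cval_open hx.
- move=> b ob; have [x0 hx0] := cval_ex xi ob; have [y0 hy0] := cval_ex eta ob.
  have hb : is_ideal b by case: ob.
  exists (f x0 y0); apply/seteqP; split => z /=.
  + move=> [x [y [hx [hy hz]]]]; rewrite /coset /=.
    have -> : z - f x0 y0 = (z - f x y) + (f x y - f x0 y0)
      by rewrite addrA subrK.
    apply: idealD => //; apply: cf => //.
    * exact: (cval_diff ob hx hx0).
    * exact: (cval_diff ob hy hy0).
  + by move=> hz; exists x0, y0.
- move=> b b' ob ob' sbb' z [x [y [hx [hy hz]]]].
  have [_ [_ h]] := cvalP xi; have [_ [_ h']] := cvalP eta.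
  by exists x, y; split; [apply: (h b b') | split; [apply: (h' b b') | apply: sbb']].
Qed.

Lemma cpl_ext (R : comPzRingType) (N : nat -> set R) (xi eta : completion N) :
  (forall b, open_ideal N b -> exists z, cval xi b z /\ cval eta b z) -> xi = eta.
Proof.
case: xi => f hf; case: eta => g hg /= H.
have efg : f = g.
  apply: funext => b.
  have [ob | nb] := pselect (open_ideal N b); last first.
  - by have [hf0 _] := hf; have [hg0 _] := hg; rewrite hf0 // hg0.
  - have [z [hzf hzg]] := H b ob.
    case: (hf) => _ [/(_ b ob) [x ex] _]; case: (hg) => _ [/(_ b ob) [y ey] _].
    have hb : is_ideal b by case: ob.
    move: hzf hzg; rewrite ex ey /coset /= => hzx hzy.
    apply/seteqP; split => w /= hw.
    + have -> : w - y = (w - x) - (z - x) + (z - y)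
        by ring.
      by apply: idealD => //; apply: idealB.
    + have -> : w - x = (w - y) - (z - y) + (z - x)
        by ring.
      by apply: idealD => //; apply: idealB.
subst g; congr Cpl; exact: Prop_irrelevance.
Qed.

Definition cadd (R : comPzRingType) (N : nat -> set R) (xi eta : completion N) :=
  Cpl (lift2_ax xi eta (@compat_add R)).
Definition cmul (R : comPzRingType) (N : nat -> set R) (xi eta : completion N) :=
  Cpl (lift2_ax xi eta (@compat_mul R)).
Definition copp (R : comPzRingType) (N : nat -> set R) (xi : completion N) :=
  Cpl (lift2_ax xi xi (@compat_opp R)).

Lemma mem_lift0 (R : comPzRingType) (N : nat -> set R) (c : R) b :
  open_ideal N b -> cval (lift0 N c) b c.
Proof. by move=> ob; split => //; rewrite subrr; apply: ideal0; case: ob. Qed.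

Lemma mem_lift2 (R : comPzRingType) (N : nat -> set R) (f : R -> R -> R)
  (cf : compat2 f) (xi eta : completion N) b x y :
  open_ideal N b -> cval xi b x -> cval eta b y ->
  cval (Cpl (lift2_ax xi eta cf)) b (f x y).
Proof.
by move=> ob hx hy; exists x, y; do 2!split => //; rewrite subrr; apply: ideal0; case: ob.
Qed.

Lemma mem_cadd (R : comPzRingType) (N : nat -> set R) (xi eta : completion N) b x y :
  open_ideal N b -> cval xi b x -> cval eta b y -> cval (cadd xi eta) b (x + y).
Proof. exact: mem_lift2. Qed.
Lemma mem_cmul (R : comPzRingType) (N : nat -> set R) (xi eta : completion N) b x y :
  open_ideal N b -> cval xi b x -> cval eta b y -> cval (cmul xi eta) b (x * y).
Proof. exact: mem_lift2. Qed.
Lemma mem_copp (R : comPzRingType) (N : nat -> set R) (xi : completion N) b x :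
  open_ideal N b -> cval xi b x -> cval (copp xi) b (- x).
Proof. by move=> ob hx; exact: (@mem_lift2 R N (fun x _ => - x) (@compat_opp R) xi xi b x x ob hx hx). Qed.

Lemma caddA (R : comPzRingType) (N : nat -> set R) : associative (@cadd R N).
Proof.
move=> a b c; apply: cpl_ext => I oI.
have [x hx] := cval_ex a oI; have [y hy] := cval_ex b oI; have [z hz] := cval_ex c oI.
exists (x + (y + z)); split; first by do !apply: mem_cadd.
by rewrite addrA; do !apply: mem_cadd.
Qed.

Lemma caddC (R : comPzRingType) (N : nat -> set R) : commutative (@cadd R N).
Proof.
move=> a b; apply: cpl_ext => I oI.
have [x hx] := cval_ex a oI; have [y hy] := cval_ex b oI.
exists (x + y); split; first by apply: mem_cadd.
by rewrite addrC; apply: mem_cadd.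
Qed.

Lemma cadd0 (R : comPzRingType) (N : nat -> set R) : left_id (lift0 N 0) (@cadd R N).
Proof.
move=> a; apply: cpl_ext => I oI.
have [x hx] := cval_ex a oI.
exists (0 + x); split; first by apply: mem_cadd => //; apply: mem_lift0.
by rewrite add0r.
Qed.

Lemma caddN (R : comPzRingType) (N : nat -> set R) : left_inverse (lift0 N 0) (@copp R N) (@cadd R N).
Proof.
move=> a; apply: cpl_ext => I oI.
have [x hx] := cval_ex a oI.
exists (- x + x); split; first by apply: mem_cadd => //; apply: mem_copp.
by rewrite addNr; apply: mem_lift0.
Qed.

HB.instance Definition _ (R : comPzRingType) (N : nat -> set R) :=
  GRing.isZmodule.Build (completion N) (@caddA R N) (@caddC R N) (@cadd0 R N) (@caddN R N).

Lemma cmulA (R : comPzRingType) (N : nat -> set R) : associative (@cmul R N).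
Proof.
move=> a b c; apply: cpl_ext => I oI.
have [x hx] := cval_ex a oI; have [y hy] := cval_ex b oI; have [z hz] := cval_ex c oI.
exists (x * (y * z)); split; first by do !apply: mem_cmul.
by rewrite mulrA; do !apply: mem_cmul.
Qed.

Lemma cmulC (R : comPzRingType) (N : nat -> set R) : commutative (@cmul R N).
Proof.
move=> a b; apply: cpl_ext => I oI.
have [x hx] := cval_ex a oI; have [y hy] := cval_ex b oI.
exists (x * y); split; first by apply: mem_cmul.
by rewrite mulrC; apply: mem_cmul.
Qed.

Lemma cmul1 (R : comPzRingType) (N : nat -> set R) : left_id (lift0 N 1) (@cmul R N).
Proof.
move=> a; apply: cpl_ext => I oI.
have [x hx] := cval_ex a oI.
exists (1 * x); split; first by apply: mem_cmul => //; apply: mem_lift0.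
by rewrite mul1r.
Qed.

Lemma cmulDl (R : comPzRingType) (N : nat -> set R) :
  left_distributive (@cmul R N) (@cadd R N).
Proof.
move=> a b c; apply: cpl_ext => I oI.
have [x hx] := cval_ex a oI; have [y hy] := cval_ex b oI; have [z hz] := cval_ex c oI.
exists ((x + y) * z); split; first by do !(apply: mem_cmul || apply: mem_cadd).
by rewrite mulrDl; do !(apply: mem_cmul || apply: mem_cadd).
Qed.

HB.instance Definition _ (R : comPzRingType) (N : nat -> set R) :=
  GRing.Zmodule_isComPzRing.Build (completion N) (@cmulA R N) (@cmulC R N)
    (@cmul1 R N) (@cmulDl R N).

Definition cpl_map (R : comPzRingType) (N : nat -> set R) (x : R) : completion N :=
  lift0 N x.

(** Fundamental system of open ideals of \hat R for the inverse limit topology: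
    the kernels of the projections \hat R -> R / N n. *)
Definition cpl_nbhd (R : comPzRingType) (N : nat -> set R) (n : nat) : set (completion N) :=
  [set xi | cval xi (N n) 0].

Arguments cpl_map {R} N x.
Arguments cpl_nbhd {R} N n.

(* An additive map [D] that is continuous for the linear topology sends some basic
   ideal [N n] into any given open ideal [b'], so [D x] modulo [b'] only depends on
   [x] modulo [N n]: [D] induces compatible maps between the quotients and hence a
   continuous additive map on their inverse limit.  Each identity defining an
   iterated higher derivation involves finitely many [D^(i)], so one can choose a
   single [N n] that works for all of them and check the identity on representatives.
   Uniqueness holds because [B] is dense in its separated completion, and topological
   integrability passes to the completion because [D^(n) y = D^(n) x + D^(n) (y - x)]
   for [y] close to a representative [x] of [xi]. *)

From HB Require Import structures.
From mathcomp Require Import all_boot all_order all_algebra.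
From mathcomp Require Import boolp classical_sets ring.
Set Implicit Arguments.
Unset Strict Implicit.
Unset Printing Implicit Defensive.
Import Order.TTheory GRing.Theory.
Local Open Scope classical_set_scope.
Local Open Scope ring_scope.

Section AdditiveMaps.
Variables (U V : zmodType) (f : U -> V).
Hypothesis fD : {morph f : x y / x + y}.

Lemma morph_add0 : f 0 = 0.
Proof. by apply: (addrI (f 0)); rewrite -fD !addr0. Qed.

Lemma morph_addB x y : f (x - y) = f x - f y.
Proof.
have fN : f (- y) = - f y by apply: (addrI (f y)); rewrite -fD !subrr morph_add0.
by rewrite fD fN.
Qed.

End AdditiveMaps.

Lemma lcontinuous_additive0 (R S : comPzRingType) (NR : nat -> set R)
    (NS : nat -> set S) (f : R -> S) :
  {morph f : x y / x + y} -> lcontinuous NR NS f ->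
  forall b', open_ideal NS b' -> exists n, forall y, NR n y -> b' (f y).
Proof.
move=> fD fc b' ob'; have [b [[_ [n sNb]] hb]] := fc 0 b' ob'.
exists n => y /sNb; rewrite -[y]subr0 => /hb.
by rewrite (morph_add0 fD) !subr0.
Qed.

Section Completion.
Variables (B : comPzRingType) (N : nat -> set B).
Hypothesis hB : lin_top N.
Implicit Types (xi eta : completion N) (b : set B).

Lemma open_ideal_basis n : open_ideal N (N n).
Proof. by split; [case: hB | exists n]. Qed.

Lemma basis_directed m n : exists k, N k `<=` N m /\ N k `<=` N n.
Proof. by have [_ /(_ m n) [k sk]] := hB; exists k; split => y /sk []. Qed.

Lemma cval_mono xi b b' x :
  open_ideal N b -> open_ideal N b' -> b `<=` b' -> cval xi b x -> cval xi b' x.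
Proof. by move=> ob ob' s; have [_ [_ mono]] := cvalP xi; apply: (mono _ _ ob ob' s x). Qed.

Lemma cvalW xi m n x : N m `<=` N n -> cval xi (N m) x -> cval xi (N n) x.
Proof. by apply: cval_mono; apply: open_ideal_basis. Qed.

Lemma cval_shift xi b x z : cval xi b x -> b (z - x) -> cval xi b z.
Proof.
move=> hx hzx; have ob := cval_open hx; have [_ [cosetP _]] := cvalP xi.
have [c ec] := cosetP b ob; move: hx; rewrite ec /coset /= => hxc.
by rewrite -(subrK x z) -addrA; apply: idealD => //; case: ob.
Qed.

Lemma cval0 b : open_ideal N b -> cval (0 : completion N) b 0.
Proof. exact: mem_lift0. Qed.

Lemma cval_cpl_map b x : open_ideal N b -> cval (cpl_map N x) b x.
Proof. exact: mem_lift0. Qed.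

Lemma cvalD xi eta b x y :
  open_ideal N b -> cval xi b x -> cval eta b y -> cval (xi + eta) b (x + y).
Proof. exact: mem_cadd. Qed.

Lemma cvalN xi b x : open_ideal N b -> cval xi b x -> cval (- xi) b (- x).
Proof. exact: mem_copp. Qed.

Lemma cvalB xi eta b x y :
  open_ideal N b -> cval xi b x -> cval eta b y -> cval (xi - eta) b (x - y).
Proof. by move=> ob hx hy; apply: cvalD => //; apply: cvalN. Qed.

Lemma cvalM xi eta b x y :
  open_ideal N b -> cval xi b x -> cval eta b y -> cval (xi * eta) b (x * y).
Proof. exact: mem_cmul. Qed.

Lemma cval_sub0 xi eta b x y :
  cval (xi - eta) b 0 -> cval xi b x -> cval eta b y -> b (x - y).
Proof.
move=> h hx hy; have ob := cval_open h.
by rewrite -[x - y]subr0; apply: cval_diff ob (cvalB ob hx hy) h.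
Qed.

Lemma cval_sum b n (F : 'I_n -> completion N) (f : 'I_n -> B) :
  open_ideal N b -> (forall j, cval (F j) b (f j)) ->
  cval (\sum_(j < n) F j) b (\sum_(j < n) f j).
Proof.
move=> ob hF; apply: (big_rec2 (fun s S => cval S b s)); first exact: cval0.
by move=> j y1 y2 _; apply: cvalD.
Qed.

Lemma cvalMn xi b x n : open_ideal N b -> cval xi b x -> cval (xi *+ n) b (x *+ n).
Proof.
move=> ob hx; elim: n => [|n IH]; first exact: cval0.
by rewrite !mulrS; apply: cvalD.
Qed.

Lemma cpl_nbhd_ideal n : is_ideal (cpl_nbhd N n).
Proof.
have on := open_ideal_basis n; split; [|split] => /=.
- exact: cval0.
- by move=> xi eta hxi heta; rewrite -(addr0 0); apply: cvalD.
- by move=> xi eta heta; have [x hx] := cval_ex xi on; rewrite -(mulr0 x); apply: cvalM.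
Qed.

Lemma open_cpl_nbhd n : open_ideal (cpl_nbhd N) (cpl_nbhd N n).
Proof. by split; [apply: cpl_nbhd_ideal | exists n]. Qed.

Lemma cpl_nbhdS m n : N m `<=` N n -> cpl_nbhd N m `<=` cpl_nbhd N n.
Proof. by move=> smn xi; apply: cvalW. Qed.

Lemma cpl_separated xi eta : (forall n, cpl_nbhd N n (xi - eta)) -> xi = eta.
Proof.
move=> sep; apply: cpl_ext => b ob; have [_ [n sNb]] := ob.
have on := open_ideal_basis n; have iN : is_ideal (N n) by case: on.
have [y hy] := cval_ex eta on; have [x hx] := cval_ex xi on.
have hxy : cval xi (N n) y.
  by apply: (cval_shift hx); rewrite -opprB; apply: idealN iN (cval_sub0 (sep n) hx hy).
by exists y; split; apply: cval_mono on ob sNb _.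
Qed.

Lemma cpl_map_dense xi n : exists x, cpl_nbhd N n (cpl_map N x - xi).
Proof.
have on := open_ideal_basis n; have [x hx] := cval_ex xi on.
exists x; rewrite /cpl_nbhd /=; apply: (cval_shift (cvalB on (cval_cpl_map x on) hx)).
by rewrite subrr subr0; apply: ideal0; case: on.
Qed.

End Completion.

Lemma cpl_continuous_eq (B C : comPzRingType) (NB : nat -> set B) (NC : nat -> set C)
    (F G : completion NB -> completion NC) :
  lin_top NB -> lin_top NC ->
  lcontinuous (cpl_nbhd NB) (cpl_nbhd NC) F ->
  lcontinuous (cpl_nbhd NB) (cpl_nbhd NC) G ->
  (forall x, F (cpl_map NB x) = G (cpl_map NB x)) -> F = G.
Proof.
move=> hB hC Fc Gc FG; apply: funext => xi; apply: cpl_separated => // p.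
have [bF [[_ [mF sF]] hF]] := Fc xi _ (open_cpl_nbhd hC p).
have [bG [[_ [mG sG]] hG]] := Gc xi _ (open_cpl_nbhd hC p).
have [k [skF skG]] := basis_directed hB mF mG.
have [x hx] := cpl_map_dense hB xi k.
have Fx := hF _ (sF _ (cpl_nbhdS hB skF hx)).
have Gx := hG _ (sG _ (cpl_nbhdS hB skG hx)).
have -> : F xi - G xi = (G (cpl_map NB x) - G xi) - (F (cpl_map NB x) - F xi).
  by rewrite FG; ring.
exact: idealB (cpl_nbhd_ideal hC p) Gx Fx.
Qed.

Section Lift.
Variables (B : comPzRingType) (N : nat -> set B).
Hypothesis hB : lin_top N.
Implicit Types (xi eta : completion N).

Definition lift_fun (D : B -> B) xi : set B -> set B :=
  fun b' => [set z | open_ideal N b' /\ exists n x,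
    (forall y, N n y -> b' (D y)) /\ cval xi (N n) x /\ b' (z - D x)].

(* When [D] is not additive and continuous, [lift_fun D xi] may fail to be an element
   of the completion; [cpl_lift D] is then the identity, a junk value. *)
Definition cpl_lift (D : B -> B) xi : completion N :=
  if pselect (cpl_ax N (lift_fun D xi)) is left h then Cpl h else xi.

Section LiftMap.
Variable D : B -> B.
Hypotheses (DD : {morph D : x y / x + y}) (Dc : lcontinuous N N D).

Lemma lift_fun_ax xi : cpl_ax N (lift_fun D xi).
Proof.
split; [|split].
- by move=> b' nb'; apply/seteqP; split => z // [].
- move=> b' ob'; have [n hn] := lcontinuous_additive0 DD Dc ob'.
  have [x hx] := cval_ex xi (open_ideal_basis hB n).
  exists (D x); apply/seteqP; split => z /=; last by move=> hz; split => //; exists n, x.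
  case=> _ [m [y [hm [hy hz]]]].
  have [k [skn skm]] := basis_directed hB n m.
  have [w hw] := cval_ex xi (open_ideal_basis hB k).
  have hxw := cval_diff (open_ideal_basis hB n) hx (cvalW hB skn hw).
  have hyw := cval_diff (open_ideal_basis hB m) hy (cvalW hB skm hw).
  have ib' : is_ideal b' by case: ob'.
  rewrite /coset /=; have -> : z - D x = (z - D y) + (D (y - w) - D (x - w)).
    by rewrite !(morph_addB DD); ring.
  by apply: idealD => //; apply: idealB => //; [apply: hm | apply: hn].
- move=> b1 b2 _ ob2 s12 z [_ [n [x [hn [hx hz]]]]]; split => //.
  by exists n, x; split; [move=> y /hn /s12 | split => //; apply: s12].
Qed.

Lemma cval_cpl_lift b' : open_ideal N b' ->
  exists n, forall xi x, cval xi (N n) x -> cval (cpl_lift D xi) b' (D x).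
Proof.
move=> ob'; have [n hn] := lcontinuous_additive0 DD Dc ob'.
exists n => xi x hx; rewrite /cpl_lift.
case: pselect => [h|nax]; last by case: nax; exact: lift_fun_ax.
split => //; exists n, x; do 2!split => //.
by rewrite subrr; apply: ideal0; case: ob'.
Qed.

Lemma cpl_lift_cpl_map x : cpl_lift D (cpl_map N x) = cpl_map N (D x).
Proof.
apply: cpl_ext => b' ob'; have [n hn] := cval_cpl_lift ob'.
exists (D x); split; last exact: cval_cpl_map.
by apply: hn; apply: cval_cpl_map (open_ideal_basis hB n).
Qed.

Lemma cpl_liftD : {morph cpl_lift D : xi eta / xi + eta}.
Proof.
move=> xi eta; apply: cpl_ext => b' ob'; have [n hn] := cval_cpl_lift ob'.
have on := open_ideal_basis hB n.
have [x hx] := cval_ex xi on; have [y hy] := cval_ex eta on.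
exists (D (x + y)); split; first exact/hn/cvalD.
by rewrite DD; apply: cvalD => //; apply: hn.
Qed.

Lemma cpl_liftZ c : (forall x, D (c * x) = c * D x) ->
  forall xi, cpl_lift D (cpl_map N c * xi) = cpl_map N c * cpl_lift D xi.
Proof.
move=> DZ xi; apply: cpl_ext => b' ob'; have [n hn] := cval_cpl_lift ob'.
have on := open_ideal_basis hB n; have [x hx] := cval_ex xi on.
exists (D (c * x)); split; first by apply/hn/cvalM => //; apply: cval_cpl_map.
by rewrite DZ; apply: cvalM => //; [apply: cval_cpl_map | apply: hn].
Qed.

Lemma cpl_lift_continuous : lcontinuous (cpl_nbhd N) (cpl_nbhd N) (cpl_lift D).
Proof.
move=> xi b' [_ [k sb']]; have [n hn] := cval_cpl_lift (open_ideal_basis hB k).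
exists (cpl_nbhd N n); split; first exact: open_cpl_nbhd.
move=> eta heta; apply: sb'; rewrite -(morph_addB cpl_liftD).
by rewrite /cpl_nbhd /= -(morph_add0 DD); apply: hn.
Qed.

End LiftMap.

Lemma cpl_lift_id : cpl_lift id = id.
Proof.
have idD : {morph (@id B) : x y / x + y} by [].
have idc : lcontinuous N N id by move=> x b' ob'; exists b'.
apply: (cpl_continuous_eq hB hB (cpl_lift_continuous idD idc)).
- by move=> xi b' ob'; exists b'.
- exact: cpl_lift_cpl_map.
Qed.

End Lift.

Section LiftFamily.
Variables (B : comPzRingType) (N : nat -> set B) (D : nat -> B -> B).
Hypotheses (hB : lin_top N) (DD : forall i, {morph D i : x y / x + y})
  (Dc : forall i, lcontinuous N N (D i)).
Implicit Types (xi eta : completion N).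

Lemma cval_cpl_lift_le b' i : open_ideal N b' ->
  exists n, forall k xi x, (k <= i)%N -> cval xi (N n) x ->
    cval (cpl_lift (D k) xi) b' (D k x).
Proof.
move=> ob'; elim: i => [|i [n hn]].
  have [n hn] := cval_cpl_lift hB (DD 0) (Dc 0) ob'.
  by exists n => k xi x; rewrite leqn0 => /eqP ->; apply: hn.
have [m hm] := cval_cpl_lift hB (DD i.+1) (Dc i.+1) ob'.
have [p [spn spm]] := basis_directed hB n m.
exists p => k xi x; rewrite leq_eqVlt ltnS => /orP[/eqP -> | ki] hx.
- exact: hm (cvalW hB spm hx).
- exact: hn ki (cvalW hB spn hx).
Qed.

Lemma cpl_lift_Leibniz :
  (forall i x y, D i (x * y) = \sum_(j < i.+1) D j x * D (i - j)%N y) ->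
  forall i xi eta, cpl_lift (D i) (xi * eta) =
    \sum_(j < i.+1) cpl_lift (D j) xi * cpl_lift (D (i - j)%N) eta.
Proof.
move=> Dleib i xi eta; apply: cpl_ext => b' ob'.
have [n hn] := cval_cpl_lift_le i ob'; have on := open_ideal_basis hB n.
have [x hx] := cval_ex xi on; have [y hy] := cval_ex eta on.
exists (D i (x * y)); split; first exact: hn (leqnn i) (cvalM on hx hy).
rewrite Dleib; apply: cval_sum => // j; apply: cvalM => //; apply: hn => //.
- by rewrite -ltnS.
- exact: leq_subr.
Qed.

Lemma cpl_lift_iterative :
  (forall i j x, D i (D j x) = D (i + j)%N x *+ 'C(i + j, i)) ->
  forall i j xi, cpl_lift (D i) (cpl_lift (D j) xi) =
    cpl_lift (D (i + j)%N) xi *+ 'C(i + j, i).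
Proof.
move=> Diter i j xi; apply: cpl_ext => b' ob'.
have [n hn] := cval_cpl_lift_le (i + j) ob'.
have [m hm] := cval_cpl_lift hB (DD j) (Dc j) (open_ideal_basis hB n).
have [k [skn skm]] := basis_directed hB n m.
have [x hx] := cval_ex xi (open_ideal_basis hB k).
exists (D i (D j x)); split; first exact: hn (leq_addr j i) (hm _ _ (cvalW hB skm hx)).
by rewrite Diter; apply: cvalMn => //; apply: hn (leqnn _) (cvalW hB skn hx).
Qed.

Lemma iter_higher_der_cpl_lift (A : comPzRingType) (phi : A -> B) :
  iter_higher_der phi D ->
  iter_higher_der (fun a => cpl_map N (phi a)) (fun i => cpl_lift (D i)).
Proof.
case=> _ [DZ [D0 [Dleib Diter]]]; split; [|split; [|split; [|split]]].
- by move=> i; apply: cpl_liftD.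
- by move=> i a; apply: cpl_liftZ.
- by move=> xi; rewrite (_ : D 0 = id) ?(cpl_lift_id hB) //; apply: funext.
- exact: cpl_lift_Leibniz.
- exact: cpl_lift_iterative.
Qed.

Lemma cpl_lift_top_integrable :
  top_integrable N D -> top_integrable (cpl_nbhd N) (fun i => cpl_lift (D i)).
Proof.
move=> Dint xi b' [_ [k sb']]; have ok := open_ideal_basis hB k.
have ik : is_ideal (N k) by case: ok.
have [b0 [n0 [[_ [m sb0]] hD0]]] := Dint 0 (N k) ok.
have [x hx] := cval_ex xi (open_ideal_basis hB m).
have [b1 [n1 [ob1 hDx]]] := Dint x (N k) ok.
exists (cpl_nbhd N m), (maxn n0 n1); split; first exact: open_cpl_nbhd.
move=> n eta; rewrite geq_max => /andP[n0n n1n] heta; apply: sb'.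
have [p hp] := cval_cpl_lift hB (DD n) (Dc n) ok.
have [q [sqp sqm]] := basis_directed hB p m.
have [y hy] := cval_ex eta (open_ideal_basis hB q).
have hyx : N m (y - x) := cval_sub0 heta (cvalW hB sqm hy) hx.
apply: (cval_shift (hp _ _ (cvalW hB sqp hy))); rewrite sub0r; apply: idealN => //.
rewrite -(subrK x y) DD; apply: idealD => //.
- by apply: hD0 => //; rewrite subr0; apply: sb0.
- by apply: hDx => //; rewrite subrr; apply: ideal0; case: ob1.
Qed.

End LiftFamily.

Unset Implicit Arguments.
Set Strict Implicit.

Theorem lemma2p24 (A B : comPzRingType) (NA : nat -> set A) (NB : nat -> set B)
    (hA : lin_top NA) (hB : lin_top NB)
    (phi : {rmorphism A -> B}) (hphi : lcontinuous NA NB phi)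
    (D : nat -> B -> B) (hD : cont_iter_higher_der NB phi D) :
  exists Dh : nat -> completion NB -> completion NB,
    (cont_iter_higher_der (cpl_nbhd NB) (fun a => cpl_map NB (phi a)) Dh /\
     (forall i x, Dh i (cpl_map NB x) = cpl_map NB (D i x))) /\
    (forall Dh' : nat -> completion NB -> completion NB,
       cont_iter_higher_der (cpl_nbhd NB) (fun a => cpl_map NB (phi a)) Dh' ->
       (forall i x, Dh' i (cpl_map NB x) = cpl_map NB (D i x)) ->
       Dh' = Dh) /\
    (top_integrable NB D -> top_integrable (cpl_nbhd NB) Dh).
Proof.
case: hD => [hDer Dc]; have DD : forall i, {morph D i : x y / x + y} by case: hDer.
exists (fun i => cpl_lift (D i)); split; [split; [split|] | split].
- exact: iter_higher_der_cpl_lift.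
- by move=> i; apply: cpl_lift_continuous.
- by move=> i x; apply: cpl_lift_cpl_map.
- move=> Dh' [_ Dh'c] Dh'D; apply: funext => i.
  apply: (cpl_continuous_eq hB hB (Dh'c i) (cpl_lift_continuous hB (DD i) (Dc i))).
  by move=> x; rewrite Dh'D cpl_lift_cpl_map.
- exact: cpl_lift_top_integrable.
Qed.
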